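(* Let $\kappa^+\ge\kappa^-\ge2$, $\alpha_j,\beta_i\ge1$ for all $i,j$, and $\mathcal{L}\in P_2(2\alpha_1,\ldots,2\alpha_{\kappa^+};-2\beta_1,\ldots,-2\beta_{\kappa^-})$. Then $E(\mathcal{L})=-1+\kappa^--\kappa^++2\sum_i\beta_i$ with $p^h(\mathcal{L})\in F$, and $e(\mathcal{L})=1+\kappa^--\kappa^+-2\sum_j\alpha_j$ with $(-1)^{\kappa^++\kappa^-+1}p^\ell(\mathcal{L})\in F$.
   Context: Pretzel diagrams: vertical strips of crossings side by side, consecutive strips joined at facing upper and lower ends, outermost ends joined by a long top and a long bottom strand; standard means the top long strand is oriented right to left. Type 2: the Seifert circles containing the top and bottom long strands are distinct with the same orientation (equivalently each strip has an even number of crossings, all smoothed horizontally). $P_2(2\alpha_1,\ldots,2\alpha_{\kappa^+};-2\beta_1,\ldots,-2\beta_{\kappa^-})$ ($\alpha_j,\beta_i\ge1$) is the set of links with a standard Type 2 pretzel diagram having $\kappa^+$ strips of $2\alpha_j$ positive crossings and $\kappa^-$ strips of $2\beta_i$ negative crossings. HOMFLY-PT: $aH(D_+)-a^{-1}H(D_-)=zH(D_0)$, $H(\text{unknot})=1$. $E,e$ are the highest/lowest $a$-degrees of $H(\mathcal{L},z,a)$ and $p^h,p^\ell$ the corresponding coefficients. $F$ is the set of nonzero Laurent polynomials in $z$ with nonnegative coefficients. *)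

From mathcomp Require Import all_boot all_order all_algebra.
Set Implicit Arguments. Unset Strict Implicit. Unset Printing Implicit Defensive.
Import Order.TTheory GRing.Theory Num.Theory.
Local Open Scope ring_scope.

(* Two-variable Laurent polynomials in z and a with integer coefficients,
   represented by their coefficient function: (p i j) is the coefficient
   of z^i a^j. *)
Definition LP := int -> int -> int.

Definition lp_one : LP := fun i j => ((i == 0) && (j == 0))%:R.
Definition lp_add (p q : LP) : LP := fun i j => p i j + q i j.
Definition lp_sub (p q : LP) : LP := fun i j => p i j - q i j.
(* multiplication by the monomial z^di a^dj *)
Definition lp_shift (di dj : int) (p : LP) : LP := fun i j => p (i - di) (j - dj).

(* HOMFLY-PT of the n-component unlink: ((a - a^-1)/z)^(n-1). *)
Definition lp_unlink (n : nat) : LP :=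
  iter n.-1 (fun p => lp_sub (lp_shift (-1) 1 p) (lp_shift (-1) (-1) p)) lp_one.

Definition remove_nth (s : seq int) (k : nat) := take k s ++ drop k.+1 s.

(* A standard Type 2 pretzel diagram is encoded by the left-to-right list s of
   its strips, entry x meaning a strip of |x| crossings, all positive if x > 0
   and all negative if x < 0 (x even; 0 = two parallel vertical arcs).
   HOMFLY-PT via the skein relation a H(D+) - a^-1 H(D-) = z H(D0) applied to
   a crossing of the first nonzero strip:
   - switching it gives (after Reidemeister II) the strip with |x|-2 crossings;
   - the oriented (horizontal) smoothing deletes the strip (remaining crossings
     become Reidemeister I kinks);
   - a diagram with only zero strips (m >= 1 of them) is the m-component
     unlink; the diagram with no strip at all (only the two long strands)
     is the 2-component unlink. *)
Fixpoint homfly_fuel (n : nat) (s : seq int) : LP :=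
  if n is n'.+1 then
    let k := find (fun x => x != 0) s in
    if (k < size s)%N then
      let x := nth 0 s k in
      if 0 < x then
        lp_add (lp_shift 0 (-2) (homfly_fuel n' (set_nth 0 s k (x - 2))))
               (lp_shift 1 (-1) (homfly_fuel n' (remove_nth s k)))
      else
        lp_sub (lp_shift 0 2 (homfly_fuel n' (set_nth 0 s k (x + 2))))
               (lp_shift 1 1 (homfly_fuel n' (remove_nth s k)))
    else lp_unlink (if s is [::] then 2 else size s)
  else lp_one.

(* the fuel is always sufficient: each step lowers sum |x| + size by >= 1 *)
Definition homfly_pretzel2 (s : seq int) : LP :=
  homfly_fuel (sumn (map absz s) + size s)%N.+1 s.

Definition inF (c : int -> int) : Prop :=
  (exists i, c i != 0) /\ (forall i, 0 <= c i).

(* E(H) = d with coefficient p^h:  d is the highest a-degree *)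
Definition top_a_degree (H : LP) (d : int) : Prop :=
  (exists i, H i d != 0) /\ (forall j, d < j -> forall i, H i j = 0).
Definition bot_a_degree (H : LP) (d : int) : Prop :=
  (exists i, H i d != 0) /\ (forall j, j < d -> forall i, H i j = 0).

(* strip list of a standard Type 2 pretzel diagram in
   P_2(2 alpha_1, ..., 2 alpha_k+; -2 beta_1, ..., -2 beta_k-),
   strips in an arbitrary left-to-right order *)
Definition is_P2_diagram (alpha beta : seq nat) (s : seq int) : bool :=
  perm_eq s ([seq (2 * a)%:Z | a <- alpha] ++ [seq - (2 * b)%:Z | b <- beta]).

From mathcomp Require Import all_boot all_order all_algebra zify ring.
Import Order.TTheory GRing.Theory Num.Theory.
Set Implicit Arguments. Unset Strict Implicit. Unset Printing Implicit Defensive.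
Local Open Scope ring_scope.

(* Give a strip the weight 1 - x if
   x <= 0 and -1 otherwise.  By induction the a-degree of H is at most the sum
   of the weights minus one, and when at least two strips are nonpositive the
   coefficient in that degree is a sum of coefficients of the same kind shifted
   in z: the only subtracted term (removing a negative strip) lies strictly below
   the bound, and each branch ends in the top coefficient z^(1-m) of an
   m-component unlink.  Hence it lies in F.  The lowest degree follows by mirror
   symmetry, which reverses all strips and maps H(z, a) to H(z, -a^-1). *)

Lemma exprzN1D (j k : int) : (-1) ^ (j + k) = (-1) ^ j * (-1) ^ k :> int.
Proof. by rewrite exprzDr ?unitrN1. Qed.

Lemma exprzN1N (j : int) : (-1) ^ (- j) = (-1) ^ j :> int.
Proof. by rewrite -exprz_inv invrN1. Qed.

Lemma exprzN1_add2 (j k : int) : (-1) ^ (j + 2 * k) = (-1) ^ j :> int.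
Proof. by rewrite exprzN1D -exprz_exp (_ : (-1) ^ 2 = 1 :> int) // exp1rz mulr1. Qed.

Lemma exprzN1S (j : int) : (-1) ^ (j + 1) = - (-1) ^ j :> int.
Proof. by rewrite exprzN1D mulrN1. Qed.

Lemma exprzN1B1 (j : int) : (-1) ^ (j - 1) = - (-1) ^ j :> int.
Proof. by rewrite exprzN1D exprN1 invrN1 mulrN1. Qed.

Lemma lp_one_mirror (i j : int) : lp_one i (- j) = (-1) ^ j * lp_one i j.
Proof.
rewrite /lp_one oppr_eq0; case: (i == 0) => /=; last by rewrite mulr0.
by case: eqP => [->|]; rewrite ?expr0z ?mul1r ?mulr0.
Qed.

Lemma lp_unlinkS k i j :
  lp_unlink k.+2 i j = lp_unlink k.+1 (i + 1) (j - 1) - lp_unlink k.+1 (i + 1) (j + 1).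
Proof. by rewrite /lp_unlink /= /lp_sub /lp_shift !opprK. Qed.

Lemma lp_unlink_above k i j : k%:Z < j -> lp_unlink k.+1 i j = 0.
Proof.
elim: k i j => [|k IH] i j hj.
  by rewrite /lp_unlink /= /lp_one (_ : (j == 0) = false) ?andbF //; lia.
by rewrite lp_unlinkS !IH ?subr0 //; lia.
Qed.

Lemma lp_unlink_top k i : lp_unlink k.+1 i k = (i == - k%:Z)%:R.
Proof.
elim: k i => [|k IH] i; first by rewrite /lp_unlink /= /lp_one andbT.
rewrite lp_unlinkS (@lp_unlink_above _ _ _ (_ : k%:Z < k.+1%:Z + 1)); last by lia.
rewrite (_ : k.+1%:Z - 1 = k); last by lia.
by rewrite IH subr0; congr _%:R; apply/eqP/eqP; lia.
Qed.

Lemma lp_unlink_mirror k (i j : int) : lp_unlink k i (- j) = (-1) ^ j * lp_unlink k i j.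
Proof.
elim: k i j => [|[|k] IH] i j; try exact: lp_one_mirror.
have e : - j + 1 = - (j - 1) by rewrite opprB addrC.
by rewrite !lp_unlinkS -opprD e !IH exprzN1S exprzN1B1; ring.
Qed.

Lemma strips_cases (s : seq int) :
  s = nseq (size s) 0 \/
  exists (l : seq int) (x : int) (r : seq int),
    [/\ s = l ++ x :: r, all (pred1 0) l & x != 0].
Proof.
elim: s => [|y s [s0 | [l [x [r [-> l0 x_neq0]]]]]]; first by left.
- have [-> | y_neq0] := eqVneq y 0; first by left; rewrite /= -s0.
  by right; exists [::], y, s.
- have [-> | y_neq0] := eqVneq y 0; first by right; exists (0 :: l), x, r.
  by right; exists [::], y, (l ++ x :: r).
Qed.

Section FirstStrip.
Variables (n : nat) (l r : seq int) (x : int).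
Hypotheses (l_zero : all (pred1 0) l) (x_neq0 : x != 0).
Local Notation s := (l ++ x :: r).

Lemma find_first_strip : find (fun y : int => y != 0) s = size l.
Proof.
rewrite find_cat (_ : has _ l = false) /= ?x_neq0 ?addn0 //.
by apply/hasPn => y /(allP l_zero) /eqP ->; rewrite eqxx.
Qed.

Lemma take_first_strip : take (size l) s = l.
Proof. exact: take_size_cat. Qed.

Lemma drop_first_strip : drop (size l).+1 s = r.
Proof. by rewrite -cat_rcons drop_size_cat // size_rcons. Qed.

Lemma set_first_strip (y : int) : set_nth 0 s (size l) y = l ++ y :: r.
Proof.
rewrite set_nthE size_cat /= addnS ltnS leq_addr.
by rewrite take_first_strip drop_first_strip.
Qed.

Lemma remove_first_strip : remove_nth s (size l) = l ++ r.
Proof. by rewrite /remove_nth take_first_strip drop_first_strip. Qed.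

Lemma homfly_fuel_pos i j : 0 < x ->
  homfly_fuel n.+1 s i j =
  homfly_fuel n (l ++ (x - 2) :: r) i (j + 2) + homfly_fuel n (l ++ r) (i - 1) (j + 1).
Proof.
move=> x_gt0; rewrite /= find_first_strip size_cat /= addnS ltnS leq_addr.
by rewrite nth_cat ltnn subnn /= x_gt0 set_first_strip remove_first_strip
  /lp_add /lp_shift !subr0 !opprK.
Qed.

Lemma homfly_fuel_neg i j : x < 0 ->
  homfly_fuel n.+1 s i j =
  homfly_fuel n (l ++ (x + 2) :: r) i (j - 2) - homfly_fuel n (l ++ r) (i - 1) (j - 1).
Proof.
move=> x_lt0; rewrite /= find_first_strip size_cat /= addnS ltnS leq_addr.
by rewrite nth_cat ltnn subnn /= ltNge ltW //= set_first_strip remove_first_strip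
  /lp_sub /lp_shift !subr0.
Qed.

End FirstStrip.

Lemma homfly_fuel_unlink n k :
  homfly_fuel n.+1 (nseq k 0) = lp_unlink (if k is 0 then 2 else k).
Proof.
rewrite /= find_nseq eqxx size_nseq /= mul1n ltnn.
by case: k.
Qed.

Lemma homfly_fuel_mirror n (s : seq int) (i j : int) :
  homfly_fuel n (map -%R s) i (- j) = (-1) ^ j * homfly_fuel n s i j.
Proof.
have sign2 (m : int) : (-1) ^ (m + 2) = (-1) ^ m :> int.
  by have := exprzN1_add2 m 1; rewrite mulr1.
have signB2 (m : int) : (-1) ^ (m - 2) = (-1) ^ m :> int.
  by have := exprzN1_add2 m (-1); rewrite mulrN1.
elim: n s i j => [|n IH] s i j; first exact: lp_one_mirror.
have [s0 | [l [x [r [-> l0 x_neq0]]]]] := strips_cases s.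
  by rewrite s0 map_nseq oppr0 !homfly_fuel_unlink lp_unlink_mirror.
have Nl0 : all (pred1 0) (map -%R l).
  by rewrite all_map; apply: sub_all l0 => y /eqP /= ->; rewrite oppr0.
have Nx_neq0 : - x != 0 by rewrite oppr_eq0.
have map_opp_cons (y : int) t : map -%R l ++ (- y) :: map -%R t = map -%R (l ++ y :: t).
  by rewrite map_cat.
rewrite map_cat.
have [x_lt0 | x_gt0] := ltrP x 0.
  rewrite (homfly_fuel_neg _ _ l0 x_neq0) // (homfly_fuel_pos _ _ Nl0 Nx_neq0) ?oppr_gt0 //.
  rewrite -opprD map_opp_cons -map_cat.
  have e2 : - j + 2 = - (j - 2) by rewrite opprB addrC.
  have e1 : - j + 1 = - (j - 1) by rewrite opprB addrC.
  by rewrite e2 e1 !IH signB2 exprzN1B1; ring.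
have {x_gt0} x_gt0 : 0 < x by rewrite lt_neqAle eq_sym x_neq0 x_gt0.
rewrite (homfly_fuel_pos _ _ l0 x_neq0) // (homfly_fuel_neg _ _ Nl0 Nx_neq0) ?oppr_lt0 //.
have ex : - x + 2 = - (x - 2) by rewrite opprB addrC.
rewrite ex map_opp_cons -map_cat -!opprD !IH sign2 exprzN1S.
ring.
Qed.

Definition top_weight (x : int) : int := if x <= 0 then 1 - x else -1.
Definition top_deg (s : seq int) : int := \sum_(x <- s) top_weight x - 1.
Definition nonpos_strips (s : seq int) : nat := count (fun x : int => x <= 0) s.
(* Without a nonpositive strip the degree may exceed [top_deg] by 2, as for the
   empty diagram, the 2-component unlink (a - a^-1)/z. *)
Definition top_bound (s : seq int) : int :=
  top_deg s + 2 * (nonpos_strips s == 0%N)%:Z.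
Definition strip_size (s : seq int) : nat := (sumn (map absz s) + size s)%N.
Definition even_strips (s : seq int) : bool := all (fun x : int => (2 %| x)%Z) s.

Lemma top_weight_cases y :
  y <= 0 /\ top_weight y = 1 - y \/ 0 < y /\ top_weight y = -1.
Proof. by rewrite /top_weight; case: leP; [left | right]. Qed.

Section StripCatCons.
Variables (l r : seq int) (y : int).

Lemma top_deg_cat_cons : top_deg (l ++ y :: r) = top_weight y + top_deg (l ++ r).
Proof. by rewrite /top_deg !big_cat big_cons /= addrCA -addrA. Qed.

Lemma nonpos_strips_cat_cons :
  nonpos_strips (l ++ y :: r) = ((y <= 0)%R + nonpos_strips (l ++ r))%N.
Proof. by rewrite /nonpos_strips !count_cat /= addnCA. Qed.

Lemma strip_size_cat_cons :
  strip_size (l ++ y :: r) = (absz y + strip_size (l ++ r)).+1%N.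
Proof. by rewrite /strip_size !map_cat !sumn_cat !size_cat /=; lia. Qed.

Lemma even_strips_cat_cons :
  even_strips (l ++ y :: r) = (2 %| y)%Z && even_strips (l ++ r).
Proof. by rewrite /even_strips !all_cat /= andbCA. Qed.

End StripCatCons.

Lemma top_deg_zeros m : top_deg (nseq m 0) = m%:Z - 1.
Proof.
by rewrite /top_deg big_nseq iter_addr_0 /top_weight lexx subr0 natz.
Qed.

Lemma nonpos_strips_zeros m : nonpos_strips (nseq m 0) = m.
Proof. by rewrite /nonpos_strips count_nseq lexx mul1n. Qed.

Ltac strip_lia x :=
  rewrite /top_bound ?top_deg_cat_cons ?nonpos_strips_cat_cons ?strip_size_cat_cons
          ?even_strips_cat_cons;
  have := top_weight_cases x; have := top_weight_cases (x - 2);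
  have := top_weight_cases (x + 2); lia.

Lemma homfly_fuel_above_top_bound n (s : seq int) (i j : int) :
  (strip_size s < n)%N -> even_strips s -> top_bound s < j -> homfly_fuel n s i j = 0.
Proof.
elim: n s i j => [//|n IH] s i j.
have [s0 | [l [x [r [-> l0 x_neq0]]]]] := strips_cases s.
  rewrite s0 homfly_fuel_unlink /top_bound top_deg_zeros nonpos_strips_zeros.
  by case: (size s) => [|m] _ _ hj; apply: lp_unlink_above; lia.
rewrite /top_bound strip_size_cat_cons even_strips_cat_cons top_deg_cat_cons
  nonpos_strips_cat_cons => sz /andP[x_even r_even] hj.
have [x_lt0 | x_gt0] := ltrP x 0.
  by rewrite (homfly_fuel_neg _ _ l0 x_neq0) // !IH ?subr0 //; strip_lia x.
have {x_gt0} x_gt0 : 0 < x by rewrite lt_neqAle eq_sym x_neq0 x_gt0.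
by rewrite (homfly_fuel_pos _ _ l0 x_neq0) // !IH ?addr0 //; strip_lia x.
Qed.

Lemma inF_eq (f g : int -> int) : inF f -> f =1 g -> inF g.
Proof.
move=> [[i fi] f_ge0] fg; split=> [|k]; last by rewrite -fg f_ge0.
by exists i; rewrite -fg.
Qed.

Lemma inF_shift (f : int -> int) : inF f -> inF (fun i => f (i - 1)).
Proof. by move=> [[i fi] f_ge0]; split=> //; exists (i + 1); rewrite addrK. Qed.

Lemma inF_add (f g : int -> int) :
  inF f -> (forall i, 0 <= g i) -> inF (fun i => f i + g i).
Proof.
move=> [[i fi] f_ge0] g_ge0; split=> [|k]; last by rewrite addr_ge0 ?f_ge0 ?g_ge0.
by exists i; move: (f_ge0 i) (g_ge0 i) fi; lia.
Qed.

Lemma inF_indicator (c : int) : inF (fun i => (i == c)%:R).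
Proof. by split=> [|i]; [exists c; rewrite eqxx | rewrite ler0n]. Qed.

Lemma homfly_fuel_top_inF n (s : seq int) : (strip_size s < n)%N -> even_strips s ->
  (2 <= nonpos_strips s)%N -> inF (fun i => homfly_fuel n s i (top_deg s)).
Proof.
elim: n s => [//|n IH] s.
have [s0 | [l [x [r [-> l0 x_neq0]]]]] := strips_cases s.
  rewrite s0 homfly_fuel_unlink top_deg_zeros nonpos_strips_zeros.
  case: (size s) => [|[|m]] // _ _ _.
  rewrite (_ : m.+2%:Z - 1 = m.+1); last by lia.
  by apply: (inF_eq (inF_indicator (- m.+1%:Z))) => i; rewrite lp_unlink_top.
rewrite strip_size_cat_cons even_strips_cat_cons nonpos_strips_cat_cons.
move=> sz /andP[x_even r_even] np.
have [x_lt0 | x_gt0] := ltrP x 0.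
  have deg_shrink : top_deg (l ++ (x + 2) :: r) = top_deg (l ++ x :: r) - 2 by strip_lia x.
  have shrink_top : inF (fun i => homfly_fuel n (l ++ (x + 2) :: r) i
                                    (top_deg (l ++ (x + 2) :: r))).
    by apply: IH; strip_lia x.
  apply: (inF_eq shrink_top) => i.
  by rewrite (homfly_fuel_neg _ _ l0 x_neq0) //
    (@homfly_fuel_above_top_bound _ (l ++ r)) ?subr0 ?deg_shrink //; strip_lia x.
have {x_gt0} x_gt0 : 0 < x by rewrite lt_neqAle eq_sym x_neq0 x_gt0.
have deg_remove : top_deg (l ++ r) = top_deg (l ++ x :: r) + 1 by strip_lia x.
have remove_top : inF (fun i => homfly_fuel n (l ++ r) i (top_deg (l ++ r))).
  by apply: IH; strip_lia x.
have [x_eq2 | x_gt2] : x = 2 \/ 2 < x by strip_lia x.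
  have deg_zero : top_deg (l ++ (x - 2) :: r) = top_deg (l ++ x :: r) + 2 by strip_lia x.
  have zero_top : inF (fun i => homfly_fuel n (l ++ (x - 2) :: r) i
                                  (top_deg (l ++ (x - 2) :: r))).
    by apply: IH; strip_lia x.
  apply: (inF_eq (inF_add zero_top (fun i => remove_top.2 (i - 1)))) => i.
  by rewrite (homfly_fuel_pos _ _ l0 x_neq0) // deg_zero deg_remove.
apply: (inF_eq (inF_shift remove_top)) => i.
by rewrite (homfly_fuel_pos _ _ l0 x_neq0) //
  (@homfly_fuel_above_top_bound _ (l ++ (x - 2) :: r)) ?add0r ?deg_remove //; strip_lia x.
Qed.

Lemma exprzN1_sqr (j : int) : (-1) ^ j * (-1) ^ j = 1 :> int.
Proof. by rewrite -exprzN1D (_ : j + j = 0 + 2 * j) ?exprzN1_add2 //; lia. Qed.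

Lemma homfly_pretzel2_mirror (s : seq int) (i j : int) :
  homfly_pretzel2 (map -%R s) i (- j) = (-1) ^ j * homfly_pretzel2 s i j.
Proof.
rewrite /homfly_pretzel2 -map_comp size_map (@eq_map _ _ (absz \o -%R) absz abszN).
exact: homfly_fuel_mirror.
Qed.

Lemma homfly_pretzel2_top (s : seq int) :
  even_strips s -> (2 <= nonpos_strips s)%N ->
  top_a_degree (homfly_pretzel2 s) (top_deg s) /\
  inF (fun i => homfly_pretzel2 s i (top_deg s)).
Proof.
move=> s_even np.
have sz : (strip_size s < (strip_size s).+1)%N by [].
have [[i Hi] H_ge0] := homfly_fuel_top_inF sz s_even np.
split; last by split; [exists i | ].
split; first by exists i.
move=> j j_gt i'; apply: homfly_fuel_above_top_bound => //.
by rewrite /top_bound (_ : (nonpos_strips s == 0%N) = false) ?addr0 //; lia.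
Qed.

Lemma homfly_pretzel2_bot (s : seq int) :
  even_strips (map -%R s) -> (2 <= nonpos_strips (map -%R s))%N ->
  let d := - top_deg (map -%R s) in
  bot_a_degree (homfly_pretzel2 s) d /\
  inF (fun i => (-1) ^ d * homfly_pretzel2 s i d).
Proof.
move=> s_even np d.
have mirrorK (j : int) i :
    homfly_pretzel2 s i (- j) = (-1) ^ j * homfly_pretzel2 (map -%R s) i j.
  by rewrite -homfly_pretzel2_mirror mapK //; exact: opprK.
have [[[i Hi] H_above] H_top] := homfly_pretzel2_top s_even np.
split; first split.
- by exists i; rewrite /d mirrorK mulf_eq0 negb_or Hi andbT expfz_neq0.
- by move=> j j_lt i'; rewrite -[j]opprK mirrorK H_above ?mulr0 //; lia.
- by apply: (inF_eq H_top) => i'; rewrite /d mirrorK exprzN1N mulrA exprzN1_sqr mul1r.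
Qed.

Lemma sum_map_affine (ns : seq nat) (f : nat -> int) (c d : int) :
  {in ns, forall a, f a = c + d * a%:Z} ->
  \sum_(a <- ns) f a = c * (size ns)%:Z + d * (sumn ns)%:Z.
Proof.
elim: ns => [|a ns IH] f_affine; first by rewrite big_nil !mulr0 addr0.
rewrite big_cons f_affine ?mem_head // IH => [|b b_ns].
  by rewrite /= !PoszD; ring.
by rewrite f_affine // inE b_ns orbT.
Qed.

Section Pretzel2.
Variables (alpha beta : seq nat) (s : seq int).
Hypothesis s_P2 : is_P2_diagram alpha beta s.

Lemma P2_even_strips : even_strips s.
Proof.
rewrite /even_strips (perm_all _ s_P2) all_cat !all_map.
by apply/andP; split; apply/allP => a _; rewrite /= dvdzE ?abszN dvdn_mulr.
Qed.

Lemma P2_mirror : is_P2_diagram beta alpha (map -%R s).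
Proof.
apply: perm_trans (perm_map -%R s_P2) _.
rewrite map_cat perm_catC -!map_comp.
rewrite (@eq_map _ _ (-%R \o (fun b : nat => - (2 * b)%:Z)) (fun b => (2 * b)%:Z)) => [|b /=].
  exact: perm_refl.
exact: opprK.
Qed.

Hypothesis alpha_pos : all (fun a => 0 < a)%N alpha.

Lemma P2_nonpos_strips : nonpos_strips s = size beta.
Proof.
rewrite /nonpos_strips (permP s_P2) count_cat !count_map.
rewrite (@eq_in_count _ _ pred0) ?count_pred0; last by move=> a /(allP alpha_pos) /=; lia.
by rewrite (@eq_in_count _ _ predT) ?count_predT // => b _ /=; rewrite oppr_le0.
Qed.

Lemma P2_top_deg : top_deg s = -1 + (size beta)%:Z - (size alpha)%:Z + 2 * (sumn beta)%:Z.
Proof.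
rewrite /top_deg (perm_big _ s_P2) big_cat /= !big_map.
rewrite (@sum_map_affine _ _ (-1) 0) => [|a /(allP alpha_pos) /= a_pos].
  rewrite (@sum_map_affine _ _ 1 2) => [|b _ /=]; first by lia.
  by have := top_weight_cases (- (2 * b)%:Z); lia.
by have := top_weight_cases (2 * a)%:Z; lia.
Qed.

End Pretzel2.

Theorem proposition4p3 (alpha beta : seq nat) (s : seq int) :
  (2 <= size beta)%N -> (size beta <= size alpha)%N ->
  all (fun x => 0 < x)%N alpha -> all (fun x => 0 < x)%N beta ->
  is_P2_diagram alpha beta s ->
  let H := homfly_pretzel2 s in
  let E : int := -1 + (size beta)%:Z - (size alpha)%:Z + 2 * (sumn beta)%:Z in
  let e : int := 1 + (size beta)%:Z - (size alpha)%:Z - 2 * (sumn alpha)%:Z in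
  [/\ top_a_degree H E, inF (fun i => H i E),
      bot_a_degree H e &
      inF (fun i => (-1) ^+ (size alpha + size beta).+1 * H i e)].
Proof.
move=> beta2 beta_alpha alpha_pos beta_pos s_P2 H E e.
have sN_P2 := P2_mirror s_P2.
have [H_top H_topF] : top_a_degree H E /\ inF (fun i => H i E).
  rewrite /E -(P2_top_deg s_P2 alpha_pos).
  apply: homfly_pretzel2_top; first exact: P2_even_strips s_P2.
  by rewrite (P2_nonpos_strips s_P2 alpha_pos).
have := homfly_pretzel2_bot (P2_even_strips sN_P2).
rewrite (P2_nonpos_strips sN_P2 beta_pos) (P2_top_deg sN_P2 beta_pos).
have -> : - (-1 + (size alpha)%:Z - (size beta)%:Z + 2 * (sumn alpha)%:Z) = e.
  by rewrite /e; lia.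
case=> [|H_bot H_botF]; first exact: leq_trans beta_alpha.
split=> //; apply: (inF_eq H_botF) => i.
have parity : ((size alpha + size beta).+1 : int) = e + 2 * (size alpha + sumn alpha)%:Z.
  by rewrite /e; lia.
by rewrite exprnP parity exprzN1_add2.
Qed.
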